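(* Let $\Bbbk=\mathbb C$ and let $\mathcal H\subset\mathcal{H}ilb_{28}(\mathbb P^6)$ be the irreducible component whose general element $[R]$ is a subscheme $R\subset\mathbb P^6$ supported at two points such that, near each of its two points, $R$ is isomorphic to a local Gorenstein scheme $\operatorname{Spec}A$ of length $14$ with Hilbert function $(1,6,6,1)$ (i.e. $A$ local Artinian Gorenstein with $\dim\mathfrak m^j/\mathfrak m^{j+1}=1,6,6,1$ for $j=0,1,2,3$). Then $$h_R(2)=h_{\mathcal H}(2)\le 27<h_{28,\mathbb P^6}(2)=28.$$
   Context: For a finite subscheme $R\subset\mathbb P^n$, $h_R(d)=\dim(\mathbb C[x_0,\dots,x_n]/I(R))_d$ with $I(R)$ the saturated homogeneous ideal; $h_{\mathcal H}$ is $h_R$ for general $[R]\in\mathcal H$; $h_{r,\mathbb P^n}(d)=\min\{r,\binom{n+d}{d}\}$. *)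

From HB Require Import structures.
From mathcomp Require Import all_boot all_order all_algebra.
From mathcomp Require Import reals.
From mathcomp Require Import complex.
From mathcomp Require Import mpoly.

Set Implicit Arguments.
Unset Strict Implicit.
Unset Printing Implicit Defensive.

Import Order.TTheory GRing.Theory Num.Theory.
Local Open Scope ring_scope.

Section Defs.
Variables (K : fieldType) (n : nat).
Notation P := {mpoly K[n]}.

Definition is_ideal (I : P -> Prop) : Prop :=
  [/\ I 0, (forall p q, I p -> I q -> I (p + q)) & (forall p q, I q -> I (p * q))].

Definition ideal_add (I J : P -> Prop) : P -> Prop :=
  fun p => exists q r, [/\ I q, J r & p = q + r].
Definition ideal_cap (I J : P -> Prop) : P -> Prop := fun p => I p /\ J p.

Definition ideal_colon (I J : P -> Prop) : P -> Prop :=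
  fun p => forall q, J q -> I (p * q).

Definition translate (a : 'I_n -> K) (p : P) : P :=
  p \mPo [tuple ('X_i + (a i)%:MP) | i < n].

(* The j-th power of the maximal ideal m_a of the point a in K^n:
   polynomials all of whose Taylor coefficients at a of order < j vanish. *)
Definition mpow (a : 'I_n -> K) (j : nat) : P -> Prop :=
  fun p => forall m : 'X_{1..n}, (mdeg m < j)%N -> (translate a p)@_m = 0.

(* dim_K (V + I)/I = d, for the K-subspace V (given as a predicate) of P:
   there are d elements of V, linearly independent modulo I, and every
   element of V is congruent modulo I to a linear combination of them. *)
Definition dim_mod (V I : P -> Prop) (d : nat) : Prop :=
  exists b : 'I_d -> P,
    [/\ (forall i, V (b i)),
        (forall c : 'I_d -> K, I (\sum_i c i *: b i) -> forall i, c i = 0) &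
        (forall p, V p -> exists c : 'I_d -> K, I (p - \sum_i c i *: b i))].

Definition colength (I : P -> Prop) (d : nat) : Prop := dim_mod (fun _ => True) I d.

Definition deg_le (d : nat) : P -> Prop := fun p => (msize p <= d.+1)%N.

End Defs.

(* The affine chart A^n = {x_0 <> 0} of P^n.  For a finite subscheme R of P^n
   contained in this chart with ideal I in K[x_1..x_n], the degree-d part of
   the saturated homogeneous ideal I(R) is the homogenization of the space of
   polynomials of degree <= d in I; hence
   h_R(d) = dim_K (K[x]_{<=d} + I)/I. *)
Definition hR (K : fieldType) (n : nat) (I : {mpoly K[n]} -> Prop) (d h : nat) : Prop :=
  dim_mod (@deg_le K n d) I h.

Definition hgen (r n d : nat) : nat := minn r 'C(n + d, d).

(* I is the ideal of a local scheme supported at a, isomorphic to Spec A with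
   A = K[x]/I local Artinian Gorenstein of length 14 with Hilbert function
   (1,6,6,1):  I is m_a-primary (contains m_a^4), dim m^j/m^{j+1} of A are
   1,6,6,1 for j = 0..3 (equivalently dim A/m^{j} = 0,1,7,13,14 for
   j = 0..4), and the socle (I : m_a)/I of A is one-dimensional. *)
Definition local_gor_1661 (K : fieldType) (n : nat) (a : 'I_n -> K)
    (I : {mpoly K[n]} -> Prop) : Prop :=
  [/\ is_ideal I,
      (forall p, mpow a 4 p -> I p) &
      colength (ideal_add I (mpow a 0)) 0] /\
  [/\
      colength (ideal_add I (mpow a 1)) 1,
      colength (ideal_add I (mpow a 2)) 7,
      colength (ideal_add I (mpow a 3)) 13,
      colength I 14 &
      dim_mod (ideal_colon I (mpow a 1)) I 1].

From HB Require Import structures.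
From mathcomp Require Import all_boot all_order all_algebra.
From mathcomp Require Import reals complex mpoly.
From mathcomp Require Import boolp zify ring.
Import GRing.Theory.
Local Open Scope ring_scope.
Set Implicit Arguments.
Unset Strict Implicit.
Unset Printing Implicit Defensive.

(* The two local ideals contain the fourth powers of the maximal ideals of
   their points, hence are comaximal, and K[x]/(I1 cap I2) has dimension
   14 + 14 = 28.  Since dim A/m^2 = 7 = 1 + 6, each I_i lies in m_{a_i}^2, so
   restricted to the line t |-> a1 + t (a2 - a1) every element of I1 cap I2
   has double roots at t = 0 and t = 1.  The divided difference g[0,0,1,1]
   therefore vanishes on these restrictions; it also vanishes on every
   polynomial of degree <= 2 but equals 1 on t^3.  Hence the cube of the
   affine coordinate along the line is not congruent to a quadric modulo
   I1 cap I2, and the quadrics span a proper subspace of the 28-dimensional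
   quotient: h_R(2) <= 27. *)

Section CatFun.
Variable T : Type.

Definition cat_fun m1 m2 (f : 'I_m1 -> T) (g : 'I_m2 -> T) (k : 'I_(m1 + m2)) : T :=
  match split k with inl i => f i | inr j => g j end.

Lemma cat_fun_lshift m1 m2 f g i : @cat_fun m1 m2 f g (lshift m2 i) = f i.
Proof. by rewrite /cat_fun (unsplitK (inl _ i)). Qed.

Lemma cat_fun_rshift m1 m2 f g j : @cat_fun m1 m2 f g (rshift m1 j) = g j.
Proof. by rewrite /cat_fun (unsplitK (inr _ j)). Qed.

End CatFun.

Lemma inj_mulmx_leq (K : fieldType) m N (A : 'M[K]_(m, N)) :
  (forall y : 'rV_m, y *m A = 0 -> y = 0) -> (m <= N)%N.
Proof.
by move/inj_row_free; rewrite -row_leq_rank => /leq_trans; apply; apply: rank_leq_col.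
Qed.

Lemma ex_max_nat (P : nat -> Prop) N : P 0%N -> (forall k, P k -> (k < N)%N) ->
  exists2 k, P k & forall k', P k' -> (k' <= k)%N.
Proof.
move=> P0 PN; have PNW k : `[< P k >] -> (k <= N)%N by move/asboolP/PN/ltnW.
case: (ex_maxnP (ex_intro _ 0%N (asboolT P0)) PNW) => k /asboolP Pk kmax.
by exists k => // k' /asboolP /kmax.
Qed.

Section Subspace.
Variables (K : fieldType) (V : lmodType K).

Definition subspace (J : V -> Prop) :=
  [/\ J 0, forall p q, J p -> J q -> J (p + q) & forall c p, J p -> J (c *: p)].

Variable J : V -> Prop.
Hypothesis J_sub : subspace J.

Lemma subspace0 : J 0. Proof. by case: J_sub. Qed.
Lemma subspaceD p q : J p -> J q -> J (p + q). Proof. by case: J_sub => _ + _; apply. Qed.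
Lemma subspaceZ c p : J p -> J (c *: p). Proof. by case: J_sub => _ _; apply. Qed.
Lemma subspaceN p : J p -> J (- p). Proof. by rewrite -scaleN1r; apply: subspaceZ. Qed.
Lemma subspaceB p q : J p -> J q -> J (p - q).
Proof. by move=> Jp Jq; apply/subspaceD/subspaceN. Qed.

Lemma subspaceBK p q : J (p - q) -> J p -> J q.
Proof. by move=> Jpq Jp; rewrite -[q](subKr p); apply: subspaceB. Qed.

Lemma subspaceBB p q r : J (p - r) -> J (q - r) -> J (p - q).
Proof. by move=> Jpr Jqr; have := subspaceB Jpr Jqr; rewrite opprB addrA subrK. Qed.

Lemma subspace_sum (I : finType) (F : I -> V) : (forall i, J (F i)) -> J (\sum_i F i).
Proof. by move=> JF; apply: big_ind => //; [apply: subspace0 | apply: subspaceD]. Qed.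

Lemma subspace_lincomb m (c : 'I_m -> K) (b : 'I_m -> V) :
  (forall i, J (b i)) -> J (\sum_i c i *: b i).
Proof. by move=> Jb; apply: subspace_sum => i; apply: subspaceZ. Qed.

End Subspace.

Section QuotientDimension.
Variables (K : fieldType) (V : lmodType K).

Lemma sum_scale_cat m1 m2 (c : 'I_(m1 + m2) -> K) (f : 'I_m1 -> V) (g : 'I_m2 -> V) :
  \sum_k c k *: cat_fun f g k
  = \sum_i c (lshift m2 i) *: f i + \sum_j c (rshift m1 j) *: g j.
Proof.
rewrite big_split_ord; congr (_ + _); apply: eq_bigr => i _;
  by rewrite ?cat_fun_lshift ?cat_fun_rshift.
Qed.

Lemma sum_scale_cat2 m1 m2 (c1 : 'I_m1 -> K) (c2 : 'I_m2 -> K)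
    (f : 'I_m1 -> V) (g : 'I_m2 -> V) :
  \sum_k cat_fun c1 c2 k *: cat_fun f g k = \sum_i c1 i *: f i + \sum_j c2 j *: g j.
Proof.
by rewrite sum_scale_cat; congr (_ + _); apply: eq_bigr => i _;
  rewrite ?cat_fun_lshift ?cat_fun_rshift.
Qed.

Definition indep_mod (J : V -> Prop) m (b : 'I_m -> V) :=
  forall c : 'I_m -> K, J (\sum_i c i *: b i) -> forall i, c i = 0.

Definition span_mod (J : V -> Prop) m (b : 'I_m -> V) (p : V) :=
  exists c : 'I_m -> K, J (p - \sum_i c i *: b i).

Definition dim_quot (U J : V -> Prop) d :=
  exists b : 'I_d -> V,
    [/\ forall i, U (b i), indep_mod J b & forall p, U p -> span_mod J b p].

Variable J : V -> Prop.
Hypothesis J_sub : subspace J.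

Lemma subspace_mulmx m N (w : 'I_N -> V) (b : 'I_m -> V) (M : 'M[K]_(m, N))
    (y : 'rV_m) :
  (forall j, J (b j - \sum_i M j i *: w i)) ->
  J (\sum_j y 0 j *: b j - \sum_i (y *m M) 0 i *: w i).
Proof.
move=> Mb; have -> : \sum_i (y *m M) 0 i *: w i = \sum_j y 0 j *: \sum_i M j i *: w i.
  under eq_bigr do rewrite mxE scaler_suml; rewrite exchange_big.
  by apply: eq_bigr => j _; rewrite scaler_sumr; apply: eq_bigr => i _; rewrite scalerA.
rewrite -sumrB; apply: (subspace_sum J_sub) => j.
by rewrite -scalerBr; apply/(subspaceZ J_sub)/Mb.
Qed.

Lemma span_mod_leq m N (b : 'I_m -> V) (w : 'I_N -> V) (M : 'M[K]_(m, N)) :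
  (forall j, J (b j - \sum_i M j i *: w i)) ->
  (forall y : 'rV_m, J (\sum_j y 0 j *: b j) -> y *m M = 0 -> y = 0) -> (m <= N)%N.
Proof.
move=> Mb yM; apply: (@inj_mulmx_leq _ _ _ M) => y y0; apply: yM => //.
have := subspace_mulmx y Mb; rewrite y0 [X in _ - X]big1 ?subr0 // => i _.
by rewrite mxE scale0r.
Qed.

Lemma indep_span_leq m N (b : 'I_m -> V) (w : 'I_N -> V) :
  indep_mod J b -> (forall j, span_mod J w (b j)) -> (m <= N)%N.
Proof.
move=> Ib /fin_all_exists [M Mb].
apply: (@span_mod_leq _ _ b w (\matrix_(j, i) M j i)) => [j|y Jy _].
  by under eq_bigr do rewrite mxE.
by apply/rowP => j; rewrite mxE (Ib (y 0) Jy).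
Qed.

Lemma indep_span_lt m N (b : 'I_m -> V) (w : 'I_N -> V) (c : 'I_N -> K) :
  indep_mod J b -> (forall j, span_mod J w (b j)) ->
  J (\sum_i c i *: w i) -> (exists i, c i != 0) -> (m < N)%N.
Proof.
move=> Ib /fin_all_exists [M Mb] Jc [i0 ci0]; rewrite -addn1.
(* The relation c is the coefficient row of an extra zero vector appended to b. *)
apply: (@span_mod_leq _ _ (cat_fun b (fun=> 0))
   w (col_mx (\matrix_(j, i) M j i) (\row_i c i))) => [k|y Jy y0].
  case: (split_ordP k) => j ->; rewrite ?cat_fun_lshift ?cat_fun_rshift.
    by under eq_bigr do rewrite col_mxEu mxE.
  by under eq_bigr do rewrite col_mxEd mxE; rewrite sub0r; apply: (subspaceN J_sub).
rewrite sum_scale_cat big_ord1 /= scaler0 addr0 in Jy.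
have yl0 := Ib _ Jy.
have yr0 : y 0 (rshift m ord0) = 0.
  move/rowP/(_ i0): y0; rewrite !mxE big_split_ord /= big1 ?add0r ?big_ord1; last first.
    by move=> j _; rewrite col_mxEu yl0 mul0r.
  by rewrite col_mxEd mxE => /eqP; rewrite mulf_eq0 (negbTE ci0) orbF => /eqP.
by apply/rowP => k; rewrite mxE; case: (split_ordP k) => j ->; rewrite ?(ord1 j).
Qed.

Lemma indep_mod_snoc m (b : 'I_m -> V) (p : V) :
  indep_mod J b -> ~ span_mod J b p -> indep_mod J (cat_fun b (fun _ : 'I_1 => p)).
Proof.
move=> Ib Np c; rewrite sum_scale_cat big_ord1 => Jc.
set t := c (rshift m ord0) in Jc.
have t0 : t = 0.
  apply: contrapT => /eqP t0; apply: Np.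
  exists (fun j => - (t^-1 * c (lshift 1 j))).
  have := subspaceZ J_sub t^-1 Jc; congr J.
  rewrite scalerDr scalerA mulVf // scale1r scaler_sumr addrC -sumrN.
  by congr (_ + _); apply: eq_bigr => j _; rewrite scaleNr opprK scalerA.
move=> k; case: (split_ordP k) => j ->; last by rewrite (ord1 j).
by apply: (Ib (fun j => c (lshift 1 j))); rewrite t0 scale0r addr0 in Jc.
Qed.

Lemma dim_quot_lt (U : V -> Prop) (v : V) N :
  subspace U -> dim_quot (fun=> True) J N -> (forall u, U u -> ~ J (v - u)) ->
  exists2 h, (h < N)%N & dim_quot U J h.
Proof.
move=> U_sub [B [_ _ spanB]] vU.
pose P k := exists2 b : 'I_k -> V, forall i, U (b i) & indep_mod J b.
have P_lt k : P k -> (k < N)%N.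
  move=> [b Ub Ib]; rewrite -addn1.
  apply: (indep_span_leq (b := cat_fun b (fun=> v)) (w := B)) => [|j]; last exact: spanB.
  apply: indep_mod_snoc => // -[c Jc]; apply: (vU _ _ Jc).
  exact: (subspace_lincomb U_sub).
have [|k [b Ub Ib] kmax] := ex_max_nat _ P_lt; first by exists (fun=> 0) => [[]|c _ []].
exists k; first by apply: P_lt; exists b.
exists b; split => // p Up; apply: contrapT => Np.
have /kmax : P (k + 1)%N.
  exists (cat_fun b (fun=> p)); last exact: indep_mod_snoc.
  by move=> i; case: (split_ordP i) => j ->; rewrite ?cat_fun_lshift ?cat_fun_rshift.
by rewrite addn1 ltnn.
Qed.

End QuotientDimension.

Section Ideals.
Variables (K : fieldType) (n : nat).
Notation P := {mpoly K[n]}.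
Implicit Types (I : P -> Prop) (a : 'I_n -> K) (p q : P).

Lemma ideal_subspace I : is_ideal I -> subspace I.
Proof. by case=> I0 ID IM; split=> // c p Ip; rewrite -mul_mpolyC; apply: IM. Qed.

Lemma is_ideal_cap I1 I2 :
  is_ideal I1 -> is_ideal I2 -> is_ideal (ideal_cap I1 I2).
Proof.
case=> I10 I1D I1M [I20 I2D I2M]; split=> [//|p q [? ?] [? ?]|p q [? ?]]; split;
  by [apply: I1D | apply: I2D | apply: I1M | apply: I2M].
Qed.

Lemma ideal_add_subspace I J : subspace I -> subspace J -> subspace (ideal_add I J).
Proof.
move=> I_sub J_sub; split.
- by exists 0, 0; rewrite addr0; split => //; apply: subspace0.
- move=> _ _ [p1 [q1 [Ip1 Jq1 ->]]] [p2 [q2 [Ip2 Jq2 ->]]].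
  exists (p1 + p2), (q1 + q2); split; [exact: subspaceD | exact: subspaceD | ring].
- move=> c _ [p1 [q1 [Ip1 Jq1 ->]]]; exists (c *: p1), (c *: q1).
  by split; [exact: subspaceZ | exact: subspaceZ | rewrite scalerDr].
Qed.

Lemma deg_le_subspace d : subspace (@deg_le K n d).
Proof.
rewrite /deg_le; split=> [|p q dp dq|c p dp]; first by rewrite msize0.
  by apply: leq_trans (msizeD_le _ _) _; rewrite geq_max dp dq.
exact: leq_trans (msizeZ_le _ _) dp.
Qed.

HB.instance Definition _ a :=
  GRing.LRMorphism.copy (translate a) (comp_mpoly [tuple 'X_i + (a i)%:MP | i < n]).

Lemma translateX a i : translate a 'X_i = 'X_i + (a i)%:MP.
Proof. by rewrite /translate comp_mpolyXU -tnth_nth tnth_map tnth_ord_tuple. Qed.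

Lemma translateC a c : translate a c%:MP = c%:MP.
Proof. exact: comp_mpolyC. Qed.

Lemma mpow_subspace a j : subspace (mpow a j).
Proof.
split=> [m _|p q Hp Hq m Hm|c p Hp m Hm].
- by rewrite raddf0 mcoeff0.
- by rewrite raddfD mcoeffD Hp // Hq // addr0.
- by rewrite linearZ mcoeffZ Hp // mulr0.
Qed.

Lemma mpowM a i j p q : mpow a i p -> mpow a j q -> mpow a (i + j) (p * q).
Proof.
move=> Hp Hq m Hm; rewrite rmorphM mcoeffM big1 // => -[k1 k2] /eqP /= Ek.
have Ed : mdeg m = (mdeg k1 + mdeg k2)%N by rewrite -mdegD; congr mdeg.
case: (ltnP (mdeg k1) i) => H1; first by rewrite Hp // mul0r.
by rewrite Hq ?mulr0 //; move: Hm H1 Ed; clear; lia.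
Qed.

Lemma mpowX a i k p : mpow a i p -> mpow a (i * k) (p ^+ k).
Proof.
move=> Hp; elim: k => [|k IH]; first by move=> m; rewrite muln0.
by rewrite exprS mulnS; apply: mpowM.
Qed.

Lemma translate_XsubC a i : translate a ('X_i - (a i)%:MP) = 'X_i.
Proof. by rewrite raddfB /= translateX translateC addrK. Qed.

Lemma mpow_XsubC a i : mpow a 1 ('X_i - (a i)%:MP).
Proof.
move=> m; rewrite ltnS leqn0 mdeg_eq0 => /eqP ->.
by rewrite translate_XsubC mcoeffX mnm1_eq0.
Qed.

Lemma span_mod_mpow2 a p :
  span_mod (mpow a 2) (cat_fun (fun _ : 'I_1 => 1) (fun i => 'X_i - (a i)%:MP)) p.
Proof.
set T := translate a p.
exists (cat_fun (fun=> T@_0) (fun i => T@_U_(i))) => m lt_m2.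
rewrite sum_scale_cat2 big_ord1 alg_mpolyC.
have -> : translate a (p - ((T@_0)%:MP + \sum_i T@_U_(i) *: ('X_i - (a i)%:MP)))
    = T - ((T@_0)%:MP + \sum_i T@_U_(i) *: 'X_i).
  rewrite raddfB raddfD /= translateC; congr (_ - (_ + _)).
  rewrite (raddf_sum (translate a)).
  by apply: eq_bigr => i _; rewrite /= linearZ /= translate_XsubC.
clearbody T; rewrite mcoeffB mcoeffD mcoeffC (raddf_sum (mcoeff m)) /=.
have [m0|m1] := eqVneq m 0%MM.
  rewrite m0 mulr1 big1 ?addr0 ?subrr // => i _.
  by rewrite mcoeffZ mcoeffX mnm1_eq0 mulr0.
have /mdeg1P [j /eqP ->] : mdeg m == 1%N.
  by move: lt_m2 m1; rewrite -mdeg_eq0; case: (mdeg m) => [|[|]].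
rewrite mulr0 add0r (bigD1 j) //= mcoeffZ mcoeffXU eqxx mulr1 big1 ?addr0 ?subrr //.
by move=> i ij; rewrite mcoeffZ mcoeffXU (negbTE ij) mulr0.
Qed.

Lemma ideal_sub_mpow2 I a : is_ideal I ->
  colength (ideal_add I (mpow a 2)) (1 + n) -> forall p, I p -> mpow a 2 p.
Proof.
(* 1 and the x_i - a_i span modulo m_a^2; an element of I outside m_a^2 would
   give them a nontrivial relation modulo I + m_a^2. *)
move=> I_id [b [_ Ib _]] p Ip; apply: contrapT => Np.
have I_sub := ideal_subspace I_id; have m2_sub := mpow_subspace a 2.
have J_sub := ideal_add_subspace I_sub m2_sub.
have m2J q : mpow a 2 q -> ideal_add I (mpow a 2) q.
  by exists 0, q; rewrite add0r; split=> //; apply: subspace0.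
pose e := cat_fun (fun _ : 'I_1 => 1 : P) (fun i => 'X_i - (a i)%:MP).
have [c Hc] : span_mod (mpow a 2) e p := span_mod_mpow2 a p.
suff : (1 + n < 1 + n)%N by rewrite ltnn.
apply: (indep_span_lt J_sub Ib (w := e) (c := c)).
- by move=> j; have [cj Hcj] := span_mod_mpow2 a (b j); exists cj; apply: m2J.
- exists p, (- (p - \sum_i c i *: e i)).
  by split=> //; [apply: (subspaceN m2_sub) | rewrite opprB addrC subrK].
apply: contrapT => c0; apply: Np; move: Hc; rewrite big1 ?subr0 // => i _.
suff -> : c i = 0 by rewrite scale0r.
by apply/eqP/contraT => ci; case: c0; exists i.
Qed.

End Ideals.

(* The two halves of the binomial expansion of (s + (1 - s)) ^ 7. *)
Lemma partition_one_expr4 (R : comRingType) (s : R) :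
    s ^+ 4 * (35%:R * (1 - s) ^+ 3 + 21%:R * s * (1 - s) ^+ 2
              + 7%:R * s ^+ 2 * (1 - s) + s ^+ 3)
  + (1 - s) ^+ 4 * ((1 - s) ^+ 3 + 7%:R * s * (1 - s) ^+ 2
                    + 21%:R * s ^+ 2 * (1 - s) + 35%:R * s ^+ 3) = 1.
Proof. ring. Qed.

Section TwoPoints.
Variables (K : fieldType) (n : nat).
Notation P := {mpoly K[n]}.
Implicit Types (I : P -> Prop) (a : 'I_n -> K) (p q : P).

Lemma ideal_partition_congr I u v m1 m2 (c1 : 'I_m1 -> K) (c2 : 'I_m2 -> K) f g :
  is_ideal I -> I u -> u + v = 1 ->
  I (\sum_i c1 i *: (f i * v) + \sum_j c2 j *: (g j * u) - \sum_i c1 i *: f i).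
Proof.
move=> I_id Iu uv; have [_ _ IM] := I_id; have I_sub := ideal_subspace I_id.
have vE : v = 1 - u by rewrite -uv [u + v]addrC addrK.
rewrite addrAC -sumrB; apply: (subspaceD I_sub).
  apply: (subspace_sum I_sub) => i; rewrite -scalerBr; apply: (subspaceZ I_sub).
  have -> : f i * v - f i = - f i * u by rewrite vE; ring.
  exact: IM.
by apply: (subspace_lincomb I_sub) => j; apply: IM.
Qed.

Lemma colength_cap I1 I2 u v m1 m2 : is_ideal I1 -> is_ideal I2 ->
  I1 u -> I2 v -> u + v = 1 -> colength I1 m1 -> colength I2 m2 ->
  colength (ideal_cap I1 I2) (m1 + m2).
Proof.
move=> I1_id I2_id I1u I2v uv [b1 [_ Ib1 Sb1]] [b2 [_ Ib2 Sb2]].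
have vu : v + u = 1 by rewrite addrC.
have [I1_sub I2_sub] := (ideal_subspace I1_id, ideal_subspace I2_id).
have congr1 c1 c2 := ideal_partition_congr c1 c2 b1 b2 I1_id I1u uv.
have congr2 c1 c2 := ideal_partition_congr c2 c1 b2 b1 I2_id I2v vu.
exists (cat_fun (fun i => b1 i * v) (fun j => b2 j * u)).
split=> [//|c [J1 J2] k|p _].
  rewrite sum_scale_cat in J1 J2.
  have c1 := Ib1 _ (subspaceBK I1_sub (congr1 _ _) J1).
  rewrite addrC in J2; have c2 := Ib2 _ (subspaceBK I2_sub (congr2 _ _) J2).
  by case: (split_ordP k) => j ->; [apply: c1 | apply: c2].
have [c1 Hc1] := Sb1 p I; have [c2 Hc2] := Sb2 p I.
exists (cat_fun c1 c2); rewrite sum_scale_cat2 /=; split.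
  by apply: (subspaceBB I1_sub Hc1); apply: congr1.
by rewrite [X in p - X]addrC; apply: (subspaceBB I2_sub Hc2); apply: congr2.
Qed.

Definition line_coord a1 a2 k : P := (a2 k - a1 k)^-1 *: ('X_k - (a1 k)%:MP).

Lemma line_coord_mpow1 a1 a2 k : mpow a1 1 (line_coord a1 a2 k).
Proof. exact/(subspaceZ (mpow_subspace _ _))/mpow_XsubC. Qed.

Lemma subr_line_coord_mpow1 a1 a2 k :
  a1 k != a2 k -> mpow a2 1 (1 - line_coord a1 a2 k).
Proof.
move=> ak; have d_neq0 : a2 k - a1 k != 0 by rewrite subr_eq0 eq_sym.
have -> : (1 : P) = (a2 k - a1 k)^-1 *: ((a2 k)%:MP - (a1 k)%:MP).
  by rewrite -mpolyCB -mul_mpolyC -mpolyCM mulVf // mpolyC1.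
rewrite /line_coord -scalerBr; apply: (subspaceZ (mpow_subspace _ _)).
have -> : (a2 k)%:MP - (a1 k)%:MP - ('X_k - (a1 k)%:MP) = - ('X_k - (a2 k)%:MP) :> P.
  by ring.
exact/(subspaceN (mpow_subspace _ _))/mpow_XsubC.
Qed.

Lemma ideals_comaximal a1 a2 k I1 I2 :
  a1 k != a2 k -> is_ideal I1 -> is_ideal I2 ->
  (forall p, mpow a1 4 p -> I1 p) -> (forall p, mpow a2 4 p -> I2 p) ->
  exists u v, [/\ I1 u, I2 v & u + v = 1].
Proof.
move=> ak [_ _ I1M] [_ _ I2M] m41 m42.
eexists; eexists; split; last exact: (partition_one_expr4 (line_coord a1 a2 k)).
  by rewrite mulrC; apply/I1M/m41; exact: (mpowX (k := 4) (line_coord_mpow1 _ _ _)).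
by rewrite mulrC; apply/I2M/m42; exact: (mpowX (k := 4) (subr_line_coord_mpow1 ak)).
Qed.

End TwoPoints.

Lemma mmap_comp_mpoly n k (R S : comRingType) (f : {rmorphism R -> S})
    (h : 'I_n -> S) (p : {mpoly R[k]}) (lq : k.-tuple {mpoly R[n]}) :
  mmap f h (p \mPo lq) = mmap f (fun i => mmap f h (tnth lq i)) p.
Proof.
rewrite comp_mpolyEX [in RHS](mpolyE p) !raddf_sum /=.
apply/eq_bigr => m _; rewrite !mmapZ; congr *%R.
rewrite comp_mpolyX rmorph_prod mmapX /mmap1.
by apply/eq_bigr => i _; rewrite rmorphXn.
Qed.

Lemma eq_mmap n (R S : ringType) (f : R -> S) (h1 h2 : 'I_n -> S)
    (p : {mpoly R[n]}) :
  h1 =1 h2 -> mmap f h1 p = mmap f h2 p.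
Proof. by move=> h12; apply: eq_bigr => m _; rewrite (mmap1_eq _ h12). Qed.

Section PolyFacts.
Variable K : fieldType.
Implicit Types (g : {poly K}) (c : K).

Lemma dvdp_mmap1 n g (h : 'I_n -> {poly K}) m :
  (forall i, g %| h i) -> g ^+ mdeg m %| mmap1 h m.
Proof.
move=> gh; rewrite /mmap1 mdegE.
elim/big_rec2: _ => [|i k q _ IH]; first by rewrite dvdpp.
by rewrite exprD; apply: dvdp_mul => //; apply: dvdp_exp2r.
Qed.

Lemma size_mmap1_leq n (h : 'I_n -> {poly K}) m :
  (forall i, size (h i) <= 2)%N -> (size (mmap1 h m) <= (mdeg m).+1)%N.
Proof.
move=> h2; rewrite /mmap1 mdegE.
elim/big_rec2: _ => [|i k q _ IH]; first by rewrite size_poly1.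
apply: leq_trans (size_mul_leq _ _) _; rewrite -subn1.
move: (size_poly_exp_leq (h i) (m i)) (h2 i) IH; set A := size _; clearbody A.
by case: (size (h i)) => [|[|[|s]]] //=; rewrite ?mul0n ?mul1n; lia.
Qed.

Lemma double_root c g : ('X - c%:P) ^+ 2 %| g -> g.[c] = 0 /\ g^`().[c] = 0.
Proof.
case/dvdpP=> q ->; rewrite derivM expr2 derivM derivXsubC !hornerE /=.
by split; ring.
Qed.

(* The divided difference g[0,0,1,1]. *)
Definition ddiff g : K := g^`().[0] + g^`().[1] - 2%:R * (g.[1] - g.[0]).

Lemma ddiffB g1 g2 : ddiff (g1 - g2) = ddiff g1 - ddiff g2.
Proof. rewrite /ddiff derivB !hornerD !hornerN; ring. Qed.

Lemma ddiff_double_roots g :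
  ('X - 0%:P) ^+ 2 %| g -> ('X - 1%:P) ^+ 2 %| g -> ddiff g = 0.
Proof.
by move=> /double_root [g0 dg0] /double_root [g1 dg1]; rewrite /ddiff g0 dg0 g1 dg1; ring.
Qed.

Lemma ddiff_quadratic g : (size g <= 3)%N -> ddiff g = 0.
Proof.
move=> g3; have -> : g = (g`_0)%:P + g`_1 *: 'X + g`_2 *: 'X^2.
  apply/polyP => i; rewrite !coefE.
  case: i => [|[|[|i]]] /=; rewrite ?mulr0 ?mulr1 ?addr0 ?add0r //.
  by rewrite nth_default //; apply: leq_trans g3 _.
rewrite /ddiff !derivE !hornerE /=; ring.
Qed.

Lemma ddiff_Xn3 : ddiff 'X^3 = 1.
Proof. rewrite /ddiff derivXn !hornerE /=; ring. Qed.

End PolyFacts.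

Section Line.
Variables (K : fieldType) (n : nat) (a1 a2 : 'I_n -> K).
Notation P := {mpoly K[n]}.

Definition restrict_line : P -> {poly K} :=
  mmap polyC (fun i => (a2 i - a1 i)%:P * 'X + (a1 i)%:P).

HB.instance Definition _ := GRing.RMorphism.copy restrict_line
  (mmap polyC (fun i => (a2 i - a1 i)%:P * 'X + (a1 i)%:P)).

Lemma restrict_line_translate (a : 'I_n -> K) c :
  (forall i, a i = a1 i + c * (a2 i - a1 i)) -> forall p,
  restrict_line p = mmap polyC (fun i => (a2 i - a1 i)%:P * ('X - c%:P)) (translate a p).
Proof.
move=> aE p; rewrite /translate mmap_comp_mpoly; apply: eq_mmap => i.
rewrite tnth_map tnth_ord_tuple mmapD mmapX mmap1U mmapC aE /=.
by rewrite !(polyCD, polyCN, polyCM); ring.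
Qed.

Lemma restrict_line_mpow2 (a : 'I_n -> K) c p :
  (forall i, a i = a1 i + c * (a2 i - a1 i)) ->
  mpow a 2 p -> ('X - c%:P) ^+ 2 %| restrict_line p.
Proof.
move=> aE p2; rewrite (restrict_line_translate aE) /mmap big_seq.
apply: (big_ind (fun g => ('X - c%:P) ^+ 2 %| g)) => [|g1 g2|m];
  [exact: dvdp0 | exact: dvdp_add | rewrite mcoeff_msupp => nz].
apply/dvdp_mull/(dvdp_trans _ (dvdp_mmap1 _ _)) => [|i]; last exact/dvdp_mull/dvdpp.
by apply: dvdp_exp2l; rewrite leqNgt; apply: contra nz => lt2; rewrite p2.
Qed.

Lemma size_restrict_line k p :
  (msize p <= k.+1)%N -> (size (restrict_line p) <= k.+1)%N.
Proof.
move=> pk; rewrite /restrict_line /mmap big_seq.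
apply: (big_ind (fun g : {poly K} => size g <= k.+1)%N) => [|g1 g2 g1k g2k|m m_supp].
- by rewrite size_poly0.
- by apply: leq_trans (size_polyD _ _) _; rewrite geq_max g1k g2k.
rewrite mul_polyC; apply: leq_trans (size_scale_leq _ _) _.
apply: leq_trans (size_mmap1_leq _ _) _ => [i|].
  by rewrite size_MXaddC; case: ifP => // _; rewrite ltnS size_polyC leq_b1.
exact: leq_trans (msize_mdeg_lt m_supp) pk.
Qed.

Lemma restrict_line_coord k : a1 k != a2 k -> restrict_line (line_coord a1 a2 k) = 'X.
Proof.
move=> ak; rewrite /line_coord /restrict_line mmapZ mmapB mmapX mmap1U mmapC addrK.
by rewrite mulrA -polyCM mulVf ?polyC1 ?mul1r // subr_eq0 eq_sym.
Qed.

End Line.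

Lemma line_cube_notin_quadrics (K : fieldType) n (a1 a2 : 'I_n -> K) k
    (I1 I2 : {mpoly K[n]} -> Prop) :
  a1 k != a2 k -> (forall p, I1 p -> mpow a1 2 p) -> (forall p, I2 p -> mpow a2 2 p) ->
  forall w, deg_le 2 w -> ~ ideal_cap I1 I2 (line_coord a1 a2 k ^+ 3 - w).
Proof.
move=> ak I1m2 I2m2 w w2 [/I1m2 m1 /I2m2 m2].
have at0 i : a1 i = a1 i + 0 * (a2 i - a1 i) by rewrite mul0r addr0.
have at1 i : a2 i = a1 i + 1 * (a2 i - a1 i) by rewrite mul1r addrC subrK.
have := ddiff_double_roots (restrict_line_mpow2 at0 m1) (restrict_line_mpow2 at1 m2).
rewrite rmorphB rmorphXn /= restrict_line_coord // ddiffB ddiff_Xn3.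
by rewrite ddiff_quadratic ?size_restrict_line // subr0 => /eqP; rewrite oner_eq0.
Qed.

Theorem mainTheorem19 (R : realType)
    (a1 a2 : 'I_6 -> complex R) (I1 I2 : {mpoly (complex R)[6]} -> Prop) :
  a1 <> a2 ->
  local_gor_1661 a1 I1 ->
  local_gor_1661 a2 I2 ->
  colength (ideal_cap I1 I2) 28 /\
  exists h : nat,
    [/\ hR (ideal_cap I1 I2) 2 h, (h <= 27)%N, (27 < hgen 28 6 2)%N
      & hgen 28 6 2 = 28%N].
Proof.
move=> a12 [[I1_id I1m4 _] [_ I1m2 _ I1len _]] [[I2_id I2m4 _] [_ I2m2 _ I2len _]].
have /existsNP [k /eqP ak] : ~ (forall k, a1 k = a2 k) by move/funext.
have [u [v [I1u I2v uv]]] := ideals_comaximal ak I1_id I2_id I1m4 I2m4.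
have I_len := colength_cap I1_id I2_id I1u I2v uv I1len I2len.
split=> //.
have [h h_lt I_dim] := dim_quot_lt (ideal_subspace (is_ideal_cap I1_id I2_id))
  (deg_le_subspace _ _ 2) I_len
  (line_cube_notin_quadrics ak (ideal_sub_mpow2 I1_id I1m2) (ideal_sub_mpow2 I2_id I2m2)).
by exists h.
Qed.
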